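(* For $n\geq 2$, the number of 2-Jacobi subsets of $S_n$ equals $2^{(n-1)!\cdot(n-1)}$.
   Context: The left-normed bracket is $[a_1]=a_1$, $[a_1,\dots,a_n]=[[a_1,\dots,a_{n-1}],a_n]$. $S_n$ is the symmetric group on $\{1,\dots,n\}$. A subset $T\subseteq S_n$ is 2-Jacobi if $\sum_{\sigma\in T}[a_{\sigma(1)},\dots,a_{\sigma(n)}]=0$ for all elements $a_1,\dots,a_n$ of every Lie algebra over the field $\mathbb Z/2$. *)

From HB Require Import structures.
From mathcomp Require Import all_boot all_order all_algebra all_fingroup.
Set Implicit Arguments. Unset Strict Implicit. Unset Printing Implicit Defensive.
Import GRing.Theory.
Local Open Scope ring_scope.

Definition is_lie_bracket (V : lmodType 'F_2) (br : V -> V -> V) : Prop :=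
  (forall x y z, br (x + y) z = br x z + br y z) /\
  (forall x y z, br x (y + z) = br x y + br x z) /\
  (forall (c : 'F_2) x y, br (c *: x) y = c *: br x y) /\
  (forall (c : 'F_2) x y, br x (c *: y) = c *: br x y) /\
  (forall x, br x x = 0) /\
  (forall x y z, br x (br y z) + br y (br z x) + br z (br x y) = 0).

(* left-normed bracket [a_1, ..., a_k] = [[a_1,...,a_{k-1}], a_k];
   the empty list is sent to 0 (never used for n >= 1). *)
Definition lnbracket (V : lmodType 'F_2) (br : V -> V -> V) (s : seq V) : V :=
  match s with
  | [::] => 0
  | x :: s' => foldl br x s'
  end.

(* [a_{sigma(1)}, ..., a_{sigma(n)}], indices 0..n-1 *)
Definition perm_bracket n (V : lmodType 'F_2) (br : V -> V -> V)
  (a : 'I_n -> V) (s : 'S_n) : V :=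
  lnbracket br [seq a (s i) | i <- enum 'I_n].

Definition two_Jacobi n (T : {set 'S_n}) : Prop :=
  forall (V : lmodType 'F_2) (br : V -> V -> V), is_lie_bracket br ->
  forall a : 'I_n -> V, \sum_(s in T) perm_bracket br a s = 0.

(* Over 'F_2 the bracket is symmetric, so [u, a_1, v] = [a_1, u, v], and since
   [a_1, _] is a derivation every left-normed bracket [a_sigma] expands into a sum
   of brackets [a_tau] with tau(1) = 1.  Cancelling in pairs, the sum over T becomes
   the sum over a set lead0_reduce T of such tau.  These (n-1)! brackets are
   linearly independent: in the Lie algebra of (n+1)x(n+1) matrices over 'F_2,
   suitable elementary matrices E_{k,k+1} make e_0 [a_rho] nonzero for exactly one
   rho.  So T is 2-Jacobi iff lead0_reduce T is empty; since the part of T made of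
   the tau with tau(1) = 1 contributes itself to lead0_reduce T, this part is
   forced by the rest of T, which is arbitrary: there are 2^(n! - (n-1)!) such T. *)

From mathcomp Require Import all_boot all_order all_algebra all_fingroup.
Set Implicit Arguments. Unset Strict Implicit. Unset Printing Implicit Defensive.
Import GRing.Theory.
Local Open Scope ring_scope.

Section Char2.
Variable V : lmodType 'F_2.

Lemma addrr_F2 (x : V) : x + x = 0.
Proof.
by rewrite -[x]scale1r -scalerDl (_ : 1 + 1 = 0) ?scale0r //; apply: val_inj.
Qed.

Lemma oppr_F2 (x : V) : - x = x.
Proof. by apply/esym/eqP; rewrite -addr_eq0 addrr_F2. Qed.

Lemma mulrn_F2 (x : V) k : x *+ k = x *+ odd k.
Proof.
rewrite -{1}(odd_double_half k) mulrnDr -mul2n mulrnA mulr2n addrr_F2.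
by rewrite mul0rn addr0.
Qed.

End Char2.

Section LieAlgebraF2.
Variables (V : lmodType 'F_2) (br : V -> V -> V).
Hypothesis lie_br : is_lie_bracket br.

Lemma lie_br0l x : br 0 x = 0.
Proof.
by case: lie_br => brDl _; have := brDl 0 0 x; rewrite addr0 addrr_F2.
Qed.

Lemma lie_br0r x : br x 0 = 0.
Proof.
by case: lie_br => _ [brDr _]; have := brDr x 0 0; rewrite addr0 addrr_F2.
Qed.

Lemma lie_brC x y : br x y = br y x.
Proof.
case: lie_br => brDl [brDr [_ [_ [brxx _]]]].
have := brxx (x + y); rewrite brDl !brDr !brxx add0r addr0 => /eqP.
by rewrite addr_eq0 oppr_F2 => /eqP.
Qed.

Lemma lie_br_derivation c y z : br c (br y z) = br (br c y) z + br (br c z) y.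
Proof.
case: lie_br => _ [_ [_ [_ [_ jacobi]]]].
have /eqP := jacobi c y z; rewrite -addrA addr_eq0 oppr_F2 => /eqP ->.
by rewrite addrC (lie_brC z) (lie_brC y) (lie_brC z c).
Qed.

Lemma lie_br_suml (I : Type) (r : seq I) (F : I -> V) y :
  br (\sum_(i <- r) F i) y = \sum_(i <- r) br (F i) y.
Proof.
case: lie_br => brDl _; elim: r => [|i r IHr].
  by rewrite !big_nil lie_br0l.
by rewrite !big_cons brDl IHr.
Qed.

Lemma foldl_br_suml (I : Type) (r : seq I) (s : seq V) (F : I -> V) :
  foldl br (\sum_(i <- r) F i) s = \sum_(i <- r) foldl br (F i) s.
Proof. by elim: s F => [|x s IHs] F //=; rewrite lie_br_suml IHs. Qed.

End LieAlgebraF2.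

Section LeftNormedBracket.
Variables (V : lmodType 'F_2) (br : V -> V -> V).

Lemma lnbracket_rcons s v : s != [::] ->
  lnbracket br (rcons s v) = br (lnbracket br s) v.
Proof. by case: s => [|x s] //= _; rewrite foldl_rcons. Qed.

Lemma lnbracket_cat s t : s != [::] ->
  lnbracket br (s ++ t) = foldl br (lnbracket br s) t.
Proof. by case: s => [|x s] //= _; rewrite foldl_cat. Qed.

End LeftNormedBracket.

Fixpoint derivation_words (T : Type) (r : seq T) : seq (seq T) :=
  match r with
  | [::] => [::]
  | x :: r' =>
    if r' is [::] then [:: [:: x]] else
    [seq rcons w x | w <- derivation_words r'] ++
    [seq x :: w | w <- derivation_words r']
  end.

Lemma derivation_words_perm (T : eqType) (r w : seq T) :
  w \in derivation_words r -> perm_eq w r.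
Proof.
elim: r w => [|x r IHr] w //=.
case: r IHr => [|y r] IHr; first by rewrite inE => /eqP ->.
rewrite mem_cat => /orP[] /mapP[w' /IHr w'r ->].
  by rewrite perm_rcons perm_cons.
by rewrite perm_cons.
Qed.

Lemma br_lnbracket_rev (V : lmodType 'F_2) (br : V -> V -> V) (T : Type)
    (a : T -> V) (r : seq T) c :
  is_lie_bracket br ->
  br c (lnbracket br (map a (rev r))) =
  \sum_(w <- derivation_words r) foldl br c (map a w).
Proof.
move=> lie_br; elim: r c => [|x r IHr] c /=.
  by rewrite big_nil lie_br0r.
case: r IHr => [|y r] IHr; first by rewrite big_seq1.
rewrite rev_cons map_rcons lnbracket_rcons; last first.
  by rewrite -size_eq0 size_map size_rev.
rewrite lie_br_derivation // IHr lie_br_suml // -/(derivation_words (y :: r)).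
rewrite IHr big_cat !big_map; congr (_ + _).
by apply: eq_bigr => w _; rewrite map_rcons foldl_rcons.
Qed.

Section PermWords.
Variable n : nat.

Definition perm_word (s : 'S_n) : seq 'I_n := [seq s i | i <- enum 'I_n].

Lemma perm_bracketE (V : lmodType 'F_2) (br : V -> V -> V) a s :
  perm_bracket br a s = lnbracket br (map a (perm_word s)).
Proof. by rewrite /perm_word -map_comp. Qed.

Lemma perm_word_inj : injective perm_word.
Proof.
move=> s t st; apply/permP => i; have := congr1 (nth i ^~ i) st.
by rewrite !(nth_map i) -?enumT ?size_enum_ord ?ltn_ord // nth_ord_enum.
Qed.

Lemma perm_word_enum s : perm_eq (perm_word s) (enum 'I_n).
Proof.
apply: uniq_perm; [|exact: enum_uniq|].
  by rewrite map_inj_uniq ?enum_uniq //; apply: perm_inj.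
move=> i; rewrite mem_enum; apply/mapP; exists (s^-1 i)%g; first by rewrite mem_enum.
by rewrite permKV.
Qed.

Lemma perm_wordP (w : seq 'I_n) :
  perm_eq w (enum 'I_n) -> exists s, w = perm_word s.
Proof.
move=> w_enum; have sz_w : size w == n by rewrite (perm_size w_enum) size_enum_ord.
have /tuple_uniqP tnth_inj : uniq (Tuple sz_w).
  by rewrite /= (perm_uniq w_enum) enum_uniq.
exists (perm tnth_inj); rewrite -[LHS](map_tnth_enum (Tuple sz_w)).
by apply: eq_map => i; rewrite permE.
Qed.

Lemma big_perm_words (Z : zmodType) (F : seq 'I_n -> Z) (r : seq (seq 'I_n)) :
  (forall w, w \in r -> exists s, w = perm_word s) ->
  \sum_(w <- r) F w = \sum_(s : 'S_n) F (perm_word s) *+ count_mem (perm_word s) r.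
Proof.
elim: r => [|w r IHr] r_words.
  by rewrite big_nil big1 // => s _; rewrite mulr0n.
have [s0 ->] := r_words w (mem_head _ _).
rewrite big_cons IHr => [|w' r_w']; last by apply: r_words; rewrite inE r_w' orbT.
under [RHS]eq_bigr do rewrite /= mulrnDr.
rewrite big_split /=; congr (_ + _).
rewrite (bigD1 s0) //= eqxx mulr1n big1 ?addr0 // => s s_s0.
by rewrite (inj_eq perm_word_inj) eq_sym (negbTE s_s0) mulr0n.
Qed.

End PermWords.

Section PivotWords.
Variables (T : eqType) (x0 : T).

(* [p, x0, q] = [x0, p, q] as the bracket is symmetric, and expanding [x0, p] with
   [br_lnbracket_rev] brings x0 to the front of every resulting word. *)
Definition pivot_words (u : seq T) : seq (seq T) :=
  let j := index x0 u in
  if j == 0%N then [:: u]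
  else [seq x0 :: w ++ drop j.+1 u | w <- derivation_words (rev (take j u))].

Lemma split_at_index (u : seq T) : x0 \in u ->
  u = take (index x0 u) u ++ x0 :: drop (index x0 u).+1 u.
Proof.
move=> u_x0; rewrite -{1}(cat_take_drop (index x0 u) u).
by rewrite (drop_nth x0) ?index_mem // nth_index.
Qed.

Lemma pivot_words_perm (u w : seq T) : x0 \in u ->
  w \in pivot_words u -> perm_eq w u.
Proof.
move=> u_x0; rewrite /pivot_words; case: ifP => [_|_]; first by rewrite inE => /eqP ->.
case/mapP => w' /derivation_words_perm w'_perm ->.
rewrite [in X in perm_eq _ X](split_at_index u_x0) -cat1s perm_catCA /= perm_cat2r.
by rewrite (permPl w'_perm) perm_rev.
Qed.

Lemma pivot_words_head (u w : seq T) : x0 \in u ->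
  w \in pivot_words u -> head x0 w = x0.
Proof.
move=> u_x0; rewrite /pivot_words; case: ifP => [/eqP j0|_]; last first.
  by case/mapP => w' _ ->.
by rewrite inE => /eqP ->; have := nth_index x0 u_x0; rewrite j0; case: (u).
Qed.

Lemma lnbracket_pivot_words (V : lmodType 'F_2) (br : V -> V -> V)
    (a : T -> V) (u : seq T) :
  is_lie_bracket br -> x0 \in u ->
  lnbracket br (map a u) = \sum_(w <- pivot_words u) lnbracket br (map a w).
Proof.
move=> lie_br u_x0; rewrite /pivot_words; case: ifP => [_|j_gt0].
  by rewrite big_seq1.
rewrite {1}(split_at_index u_x0) map_cat lnbracket_cat; last first.
  by rewrite -size_eq0 size_map size_take index_mem u_x0 j_gt0.
rewrite /= lie_brC // -[take _ u]revK br_lnbracket_rev // foldl_br_suml //.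
by rewrite revK big_map; apply: eq_bigr => w _ /=; rewrite map_cat foldl_cat.
Qed.

End PivotWords.


Section LeadingZero.
Variable m : nat.

Definition fix0 : {set 'S_m.+1} := [set s : 'S_m.+1 | s ord0 == ord0].

Definition lead0_support (s : 'S_m.+1) : {set 'S_m.+1} :=
  [set t | odd (count_mem (perm_word t) (pivot_words ord0 (perm_word s)))].

Lemma ord0_in_perm_word (s : 'S_m.+1) : ord0 \in perm_word s.
Proof. by rewrite (perm_mem (perm_word_enum s)) mem_enum. Qed.

Lemma head_perm_word (s : 'S_m.+1) : head ord0 (perm_word s) = s ord0.
Proof. by rewrite /perm_word enum_ordSl. Qed.

Lemma lead0_support_sub s : lead0_support s \subset fix0.
Proof.
apply/subsetP => t; rewrite !inE => odd_t.
have : perm_word t \in pivot_words ord0 (perm_word s).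
  by rewrite -has_pred1 has_count; case: count odd_t.
by move/(pivot_words_head (ord0_in_perm_word s)); rewrite head_perm_word => ->.
Qed.

Lemma lead0_support_fix0 s : s \in fix0 -> lead0_support s = [set s].
Proof.
rewrite inE => /eqP s0; apply/setP => t; rewrite !inE /pivot_words.
have -> : index ord0 (perm_word s) = 0%N by rewrite /perm_word enum_ordSl /= s0 eqxx.
by rewrite /= addn0 (inj_eq (@perm_word_inj _)) eq_sym; case: (t == s).
Qed.

Lemma perm_bracket_lead0_support (V : lmodType 'F_2) (br : V -> V -> V)
    (a : 'I_m.+1 -> V) s :
  is_lie_bracket br ->
  perm_bracket br a s = \sum_(t in lead0_support s) perm_bracket br a t.
Proof.
move=> lie_br; have s_0 := ord0_in_perm_word s.
rewrite perm_bracketE (lnbracket_pivot_words _ lie_br s_0) big_perm_words.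
  rewrite [RHS]big_mkcond; apply: eq_bigr => t _.
  by rewrite inE mulrn_F2 perm_bracketE; case: odd.
move=> w /(pivot_words_perm s_0) w_perm; apply: perm_wordP.
by rewrite (permPl w_perm) perm_word_enum.
Qed.

End LeadingZero.

Definition commutator_mx n (A B : 'M['F_2]_n) : 'M['F_2]_n := A *m B - B *m A.
Arguments commutator_mx {n} A B.

Lemma commutator_mx_lie n : is_lie_bracket (@commutator_mx n).
Proof.
have cyclic_sum0 (a b c d e f : 'M['F_2]_n) :
    (a - b - (c - d)) + (c - e - (f - b)) + (f - d - (a - e)) = 0.
  rewrite !opprB !addrA addrNK subrK (addrAC _ (- e) b) (addrAC _ d b) subrK.
  by rewrite (addrAC _ (- e) (- d)) addrK subrK subrr.
rewrite /commutator_mx; do ![split].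
- by move=> x y z; rewrite mulmxDl mulmxDr opprD addrACA.
- by move=> x y z; rewrite mulmxDr mulmxDl opprD addrACA.
- by move=> c x y; rewrite -scalemxAl -scalemxAr scalerBr.
- by move=> c x y; rewrite -scalemxAl -scalemxAr scalerBr.
- by move=> x; apply: subrr.
- by move=> x y z; rewrite !mulmxBr !mulmxBl !mulmxA cyclic_sum0.
Qed.

Section CommutatorModel.
Variable m : nat.
Local Notation M := 'M['F_2]_m.+2.
Local Notation row := 'rV['F_2]_m.+2.

Definition basis_row k : row := \row_(j < m.+2) ((j : nat) == k)%:R.

Lemma basis_row_mul_delta k (p q : 'I_m.+2) :
  basis_row k *m delta_mx p q = basis_row q *+ ((p : nat) == k).
Proof.
apply/rowP => j; rewrite !mxE (bigD1 p) //= big1 => [|l /negbTE l_p]; last first.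
  by rewrite !mxE l_p mulr0.
rewrite !mxE eqxx /= addr0 mulmxnE mxE.
by case: (p == k :> nat); rewrite ?mulr0n ?mulr1n ?mul0r ?mul1r.
Qed.

Lemma foldl_mulmx_mulrb (X : 'I_m.+1 -> M) (l : seq 'I_m.+1) (v : row) (b : bool) :
  foldl (fun v i => v *m X i) (v *+ b) l = foldl (fun v i => v *m X i) v l *+ b.
Proof. by case: b; rewrite ?mulr1n ?mulr0n //; elim: l => //= i l; rewrite mul0mx. Qed.

Variable tau : 'S_m.+1.
Hypothesis tau0 : tau ord0 = ord0.

(* The generator [a_i] is the elementary matrix E_{k,k+1} with k = tau^-1 i,
   so that a left-normed bracket acting on e_0 walks along the chain
   e_0 -> e_1 -> ... -> e_{m+1} exactly when the letters come in the order of tau. *)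
Definition chain_mx (i : 'I_m.+1) : M :=
  delta_mx (inord (tau^-1 i)%g) (inord (tau^-1 i)%g.+1).

Local Notation mul_chain := (fun (v : row) i => v *m chain_mx i).

Lemma basis_row_mul_chain k i :
  basis_row k *m chain_mx i =
  basis_row (tau^-1 i)%g.+1 *+ (((tau^-1 i)%g : nat) == k).
Proof.
have lt_i := ltn_ord (tau^-1 i)%g.
by rewrite basis_row_mul_delta !inordK //; apply: leq_trans lt_i _.
Qed.

Lemma basis_row_mul_chains k l :
  foldl mul_chain (basis_row k) l =
  basis_row (k + size l)%N *+ ([seq ((tau^-1 i)%g : nat) | i <- l] == iota k (size l)).
Proof.
elim: l k => [|i l IHl] k /=; first by rewrite addn0 mulr1n.
rewrite basis_row_mul_chain foldl_mulmx_mulrb IHl eqseq_cons.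
by have [<-|] := eqVneq ((tau^-1 i)%g : nat) k; rewrite ?mulr1n ?addSnnS ?mulr0n.
Qed.

Lemma basis_row0_mul_chain i : i != ord0 -> basis_row 0 *m chain_mx i = 0.
Proof.
move=> i0; rewrite basis_row_mul_chain; case: eqP => [tau_i0|]; last by rewrite mulr0n.
by move: i0; rewrite -(permKV tau i) (_ : (tau^-1 i)%g = ord0) ?tau0 ?eqxx //; apply: val_inj.
Qed.

Lemma basis_row0_foldl_commutator A l : ord0 \notin l ->
  basis_row 0 *m foldl commutator_mx A (map chain_mx l) =
  foldl mul_chain (basis_row 0 *m A) l.
Proof.
elim: l A => [|i l IHl] A //=; rewrite inE negb_or => /andP[i0 l0].
rewrite IHl // /commutator_mx mulmxBr !mulmxA basis_row0_mul_chain ?mul0mx ?subr0 //.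
by rewrite eq_sym.
Qed.

Lemma basis_row0_perm_bracket (rho : 'S_m.+1) : rho ord0 = ord0 ->
  basis_row 0 *m perm_bracket commutator_mx chain_mx rho =
  basis_row m.+1 *+ (rho == tau).
Proof.
move=> rho0; rewrite perm_bracketE.
have -> : (rho == tau) =
    ([seq ((tau^-1 i)%g : nat) | i <- perm_word rho] == iota 0 m.+1).
  rewrite -val_enum_ord /perm_word -map_comp; apply/eqP/eqP => [->|tau_rho].
    by apply: eq_map => j /=; rewrite permK.
  apply/permP => j; have /val_inj tau_rho_j : (tau^-1 (rho j))%g = j :> nat.
    by move/eq_in_map: tau_rho; apply; rewrite mem_enum.
  by rewrite -[in RHS]tau_rho_j permKV.
have uniq_w : uniq (perm_word rho) by rewrite (perm_uniq (perm_word_enum rho)) enum_uniq.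
have sz_w : size (perm_word rho) = m.+1 by rewrite size_map size_enum_ord.
have := head_perm_word rho; rewrite rho0.
case: (perm_word rho) uniq_w sz_w => [|x l] //= /andP[x_l _] [sz_l] x0.
subst x; rewrite basis_row0_foldl_commutator //.
by have /= -> := basis_row_mul_chains 0 (ord0 :: l); rewrite sz_l.
Qed.

End CommutatorModel.

Lemma cardsI1 (T : finType) (A : {set T}) x : #|A :&: [set x]| = (x \in A).
Proof.
have [xA|xA] := boolP (x \in A); first by rewrite (setIidPr _) ?sub1set ?cards1.
by apply/eqP; rewrite cards_eq0 setI_eq0 disjoint_sym disjoints1.
Qed.

Section Reduction.
Variable m : nat.

Definition lead0_reduce (T : {set 'S_m.+1}) : {set 'S_m.+1} :=
  [set t | odd #|[set s in T | t \in lead0_support s]|].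

Lemma sum_lead0_reduce (V : lmodType 'F_2) (br : V -> V -> V)
    (a : 'I_m.+1 -> V) (T : {set 'S_m.+1}) :
  is_lie_bracket br ->
  \sum_(s in T) perm_bracket br a s = \sum_(t in lead0_reduce T) perm_bracket br a t.
Proof.
move=> lie_br; under eq_bigr do rewrite (perm_bracket_lead0_support _ _ lie_br).
rewrite (exchange_big_dep predT) //= [RHS]big_mkcond; apply: eq_bigr => t _.
rewrite (eq_bigl (mem [set s in T | t \in lead0_support s])) => [|s]; last by rewrite !inE.
by rewrite sumr_const mulrn_F2 inE; case: odd.
Qed.

Lemma lead0_reduce_sub T : lead0_reduce T \subset fix0 m.
Proof.
apply/subsetP => t; rewrite inE => /odd_gt0/card_gt0P[s].
by rewrite inE => /andP[_]; apply/subsetP/lead0_support_sub.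
Qed.

Lemma lead0_reduce_notin T t : t \notin fix0 m -> (t \in lead0_reduce T) = false.
Proof. by apply: contraNF; apply/subsetP/lead0_reduce_sub. Qed.

Lemma two_JacobiE T : two_Jacobi T <-> lead0_reduce T = set0.
Proof.
split=> [T_jacobi|reduce0 V br lie_br a]; last first.
  by rewrite sum_lead0_reduce // reduce0 big_set0.
apply/setP => tau; rewrite in_set0; apply/negP => tau_T.
have fix0_T := subsetP (lead0_reduce_sub T).
have /fix0_T := tau_T; rewrite inE => /eqP tau0.
have := T_jacobi _ _ (commutator_mx_lie m.+2) (chain_mx tau).
rewrite (sum_lead0_reduce _ _ (commutator_mx_lie m.+2)) => /(congr1 (mulmx (basis_row m 0))).
rewrite mulmx0 mulmx_sumr (eq_bigr (fun rho => basis_row m m.+1 *+ (rho == tau))).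
  rewrite (bigD1 tau) //= eqxx mulr1n big1 ?addr0 => [|rho /andP[_ /negbTE->]//].
  by move/rowP/(_ ord_max); rewrite !mxE eqxx => /eqP; rewrite oner_eq0.
by move=> rho /fix0_T; rewrite inE => /eqP /(basis_row0_perm_bracket tau0).
Qed.

Lemma lead0_reduce_fix0 T t : t \in fix0 m ->
  (t \in lead0_reduce T) = (t \in T) (+) (t \in lead0_reduce (T :\: fix0 m)).
Proof.
move=> fix0_t; rewrite !inE -(cardsID (fix0 m)) oddD; congr (_ (+) _).
  rewrite (_ : _ :&: _ = T :&: [set t]) ?cardsI1 ?oddb //.
  apply/setP => s; rewrite in_setI; have [fix0_s|fix0N_s] := boolP (s \in fix0 m).
    by rewrite inE lead0_support_fix0 // !inE eq_sym andbT.
  rewrite andbF in_setI in_set1; apply/esym/andP => -[_ /eqP s_t].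
  by rewrite s_t fix0_t in fix0N_s.
by congr (odd _); apply: eq_card => s; rewrite !inE andbA.
Qed.

(* A 2-Jacobi set is determined by its part outside [fix0], which is arbitrary. *)
Definition jacobi_completion (U : {set 'S_m.+1}) : {set 'S_m.+1} := U :|: lead0_reduce U.

Lemma lead0_reduce_eq0 T :
  (lead0_reduce T == set0) = (T == jacobi_completion (T :\: fix0 m)).
Proof.
have reduceE t :
    (t \in lead0_reduce T) = (t \in T) (+) (t \in jacobi_completion (T :\: fix0 m)).
  rewrite in_setU in_setD; have [fix0_t|fix0N_t] := boolP (t \in fix0 m).
    by rewrite lead0_reduce_fix0.
  by rewrite !lead0_reduce_notin // orbF addbb.
apply/eqP/eqP => [reduce0|T_eq]; apply/setP => t; have := reduceE t.
  by rewrite reduce0 in_set0; case: (t \in T); case: (t \in _).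
by rewrite -T_eq addbb in_set0.
Qed.

Lemma jacobi_completionK (U : {set 'S_m.+1}) : U \subset ~: fix0 m ->
  jacobi_completion U :\: fix0 m = U.
Proof.
move=> U_fix0; apply/setP => t; rewrite in_setD in_setU.
have [fix0_t|fix0N_t] := boolP (t \in fix0 m); last first.
  by rewrite lead0_reduce_notin // orbF.
by apply/esym/negbTE; apply: contraL fix0_t => /(subsetP U_fix0); rewrite inE.
Qed.

Lemma card_jacobi_sets :
  #|[set T : {set 'S_m.+1} | lead0_reduce T == set0]| = (2 ^ #|~: fix0 m|)%N.
Proof.
rewrite -card_powerset.
have -> : [set T | lead0_reduce T == set0] = jacobi_completion @: powerset (~: fix0 m).
  apply/setP => T; rewrite inE lead0_reduce_eq0; apply/eqP/imsetP => [T_eq|[U]].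
    by exists (T :\: fix0 m); rewrite // powersetE setDE subsetIr.
  by rewrite powersetE => U_fix0 ->; rewrite jacobi_completionK.
apply: card_in_imset => U1 U2; rewrite !powersetE => U1_fix0 U2_fix0 U12.
by rewrite -(jacobi_completionK U1_fix0) U12 jacobi_completionK.
Qed.

Lemma card_fix0 : #|fix0 m| = m`!.
Proof.
rewrite -[m in RHS]/(m.+1.-1) -[m.+1 in RHS]card_ord -(cardsC1 (@ord0 m)) -card_perm.
apply: eq_card => s; rewrite inE; apply/eqP/subsetP => [s0 i|s_on].
  by rewrite !inE; apply: contra => /eqP ->; rewrite s0.
by apply/eqP/negPn/negP => /s_on; rewrite !inE eqxx.
Qed.

Lemma card_setC_fix0 : #|~: fix0 m| = (m`! * m)%N.
Proof.
apply/eqP; rewrite -(eqn_add2l #|fix0 m|) cardsC card_Sn card_fix0.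
by rewrite factS mulSn mulnC.
Qed.

End Reduction.

Local Close Scope ring_scope.

Theorem corollary2 (n : nat) (hn : 2 <= n) :
  exists A : {set {set 'S_n}},
    (forall T : {set 'S_n}, T \in A <-> two_Jacobi T) /\
    #|A| = 2 ^ ((n.-1)`! * n.-1).
Proof.
case: n hn => [|m] // _.
exists [set T : {set 'S_m.+1} | lead0_reduce T == set0]; split.
  by move=> T; rewrite inE; split => [/eqP/two_JacobiE|/two_JacobiE/eqP].
by rewrite card_jacobi_sets card_setC_fix0.
Qed.
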